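(* Consider $N$ atoms at positions $\mathbf q_1,\dots,\mathbf q_N\in\mathbb R^3$ with $\mathbf r_{ij}=\mathbf q_i-\mathbf q_j$, radii $0<r_c<r_s$, skin $\Delta r\ge0$, batch size $p\ge1$, and a nonnegative electron density function $\rho$ with $\rho(|\mathbf r_{ij}|):=0$ when $|\mathbf r_{ij}|>r_s$. Let $\bar\rho_i=\sum_{j\ne i,|\mathbf r_{ij}|\le r_s}\rho(|\mathbf r_{ij}|)$. Suppose a half neighbor list is given: for every unordered pair $\{i,j\}$, $i\ne j$, with $|\mathbf r_{ij}|\le r_s+\Delta r$, exactly one of the two atoms is listed as a neighbor of the other. For each atom $k$ let $\mathfrak R_k^c$ be the listed neighbors $j$ of $k$ with $|\mathbf r_{kj}|\le r_c$, $\mathfrak R_k^s$ the listed neighbors $j$ of $k$ with $r_c<|\mathbf r_{kj}|\le r_s+\Delta r$, $N_k^s=|\mathfrak R_k^s|$, and let $\mathfrak B_k$ be a uniformly random subset of $\mathfrak R_k^s$ of size $p$ (with $\mathfrak B_k=\mathfrak R_k^s$ and $N_k^s/p$ replaced by $1$ if $N_k^s\le p$), the batches for different $k$ being independent. Define $$\tilde{\bar\rho}_i=\sum_{j\in\mathfrak R_i^c}\rho(|\mathbf r_{ij}|)+\sum_{j'\ne i:\ i\in\mathfrak R_{j'}^c}\rho(|\mathbf r_{j'i}|)+\frac{N_i^s}{p}\sum_{j\in\mathfrak B_i}\rho(|\mathbf r_{ji}|)+\sum_{j'\ne i:\ i\in\mathfrak B_{j'}}\frac{N_{j'}^s}{p}\rho(|\mathbf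 r_{j'i}|),$$ and $\mathcal Q_i=\tilde{\bar\rho}_i-\bar\rho_i$. Then $\mathbb E[\mathcal Q_i]=0$ and the variance of $\mathcal Q_i$ is bounded.
   Context: This is the random batch list approximation of the host electron density of the embedded atom method (EAM) potential, adapted to a Newton-pair (half neighbor list) implementation in which each pair interaction is computed once and its contribution copied to the other atom. Expectation and variance are over the random batch choices, with positions fixed. *)

From HB Require Import structures.
From mathcomp Require Import all_boot all_order all_algebra.
From mathcomp Require Import reals.
Set Implicit Arguments. Unset Strict Implicit. Unset Printing Implicit Defensive.
Import Order.TTheory GRing.Theory Num.Theory.
Local Open Scope ring_scope.

Section EAM.
Variable R : realType.
Variable N : nat.
Variable q : 'I_N -> 'rV[R]_3.

Definition dist (i j : 'I_N) : R :=
  Num.sqrt (\sum_(k < 3) (q i 0 k - q j 0 k) ^+ 2).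

Variables (rc rs dr : R) (p : nat) (rho : R -> R).
(* half neighbor list: nbr k = atoms listed as neighbors of k *)
Variable nbr : 'I_N -> {set 'I_N}.

Definition Rc (k : 'I_N) : {set 'I_N} := [set j in nbr k | dist k j <= rc].
Definition Rs (k : 'I_N) : {set 'I_N} :=
  [set j in nbr k | (rc < dist k j) && (dist k j <= rs + dr)].
Definition Ns (k : 'I_N) : nat := #|Rs k|.

(* admissible batches for atom k: subsets of R_k^s of size p,
   or R_k^s itself when N_k^s <= p *)
Definition adm (k : 'I_N) : {set {set 'I_N}} :=
  [set B : {set 'I_N} | (B \subset Rs k) && (#|B| == minn p (Ns k))].

Definition batches := {ffun 'I_N -> {set 'I_N}}.

(* product of independent uniform laws on adm k *)
Definition weight (B : batches) : R :=
  \prod_(k < N) (if B k \in adm k then (#|adm k|%:R)^-1 else 0).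

Definition Expect (X : batches -> R) : R := \sum_(B : batches) weight B * X B.
Definition Variance (X : batches -> R) : R :=
  Expect (fun B => (X B - Expect X) ^+ 2).

Definition coef (k : 'I_N) : R :=
  if (Ns k <= p)%N then 1 else (Ns k)%:R / p%:R.

Definition rhobar (i : 'I_N) : R :=
  \sum_(j < N | (j != i) && (dist i j <= rs)) rho (dist i j).

Definition rhotilde (i : 'I_N) (B : batches) : R :=
    \sum_(j in Rc i) rho (dist i j)
  + \sum_(j' < N | (j' != i) && (i \in Rc j')) rho (dist j' i)
  + coef i * \sum_(j in B i) rho (dist j i)
  + \sum_(j' < N | (j' != i) && (i \in B j')) coef j' * rho (dist j' i).

Definition Qi (i : 'I_N) (B : batches) : R := rhotilde i B - rhobar i.

Definition rhomax (i : 'I_N) : R :=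
  \big[Num.max/0]_(j < N | j != i) rho (dist i j).

End EAM.

From Pilot Require Import Defs.
From HB Require Import structures.
From mathcomp Require Import all_boot all_order all_algebra.
From mathcomp Require Import reals.
From mathcomp Require Import ring lra.
Import Order.TTheory GRing.Theory Num.Theory.
Local Open Scope ring_scope.
Set Implicit Arguments. Unset Strict Implicit. Unset Printing Implicit Defensive.

(* Qi i is a sum, over the atoms m, of centred terms each depending on the batch of m
   alone.  Each term has the right mean because coef m is the inverse of the probability
   min(p, Ns m) / Ns m that a given member of Rs m is drawn, and these means together
   with the deterministic cut-off sums give rhobar i because the half list stores every
   pair within rs in exactly one of the four lists read by rhotilde i.  Independence of
   the batches then makes the variance the sum of the per-atom variances: the own-batch
   term and its mean both lie in [0, rhomax i * Ns i], while the term of another atom m is a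
   scaled Bernoulli variable, whose variance is rho (dist m i) ^ 2 (coef m - 1). *)

Section ProductLaw.
Variables (R : comPzRingType) (I T : finType) (w : I -> T -> R).

Definition prodE (X : {ffun I -> T} -> R) : R :=
  \sum_(B : {ffun I -> T}) (\prod_k w k (B k)) * X B.
Definition margE k (f : T -> R) : R := \sum_S w k S * f S.

Lemma eq_margE k f g : f =1 g -> margE k f = margE k g.
Proof. by move=> fg; apply: eq_bigr => S _; rewrite fg. Qed.

Lemma eq_prodE X Y : X =1 Y -> prodE X = prodE Y.
Proof. by move=> XY; apply: eq_bigr => B _; rewrite XY. Qed.

Lemma margE_sum (J : Type) (r : seq J) k (F : J -> T -> R) :
  margE k (fun S => \sum_(j <- r) F j S) = \sum_(j <- r) margE k (F j).
Proof. by rewrite /margE exchange_big; apply: eq_bigr => S _; rewrite mulr_sumr. Qed.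

Lemma margEZ k c f : margE k (fun S => c * f S) = c * margE k f.
Proof. by rewrite /margE mulr_sumr; apply: eq_bigr => S _; rewrite mulrCA. Qed.

Lemma prodE_sum (J : Type) (r : seq J) (X : J -> {ffun I -> T} -> R) :
  prodE (fun B => \sum_(m <- r) X m B) = \sum_(m <- r) prodE (X m).
Proof. by rewrite /prodE exchange_big; apply: eq_bigr => B _; rewrite mulr_sumr. Qed.

Lemma prodE_prod (F : I -> T -> R) :
  prodE (fun B => \prod_k F k (B k)) = \prod_k margE k (F k).
Proof. by rewrite bigA_distr_bigA; apply: eq_bigr => B _; rewrite big_split. Qed.

Hypothesis w_sum1 : forall k, \sum_S w k S = 1.

Lemma margE_cst k c : margE k (fun=> c) = c.
Proof. by rewrite /margE -mulr_suml w_sum1 mul1r. Qed.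

Lemma margE_centered k f : margE k (fun S => f S - margE k f) = 0.
Proof.
rewrite {1}/margE; under eq_bigr do rewrite mulrBr.
by rewrite sumrB -mulr_suml w_sum1 mul1r subrr.
Qed.

Lemma margE_sqr_centered k f :
  margE k (fun S => (f S - margE k f) ^+ 2) = margE k (fun S => f S ^+ 2) - margE k f ^+ 2.
Proof.
set m := margE k f.
transitivity (\sum_S (w k S * f S ^+ 2 - 2 * m * (w k S * f S) + m ^+ 2 * w k S)).
  by apply: eq_bigr => S _; ring.
rewrite big_split sumrB /= -!mulr_sumr w_sum1 -/(margE k f) -/m.
rewrite -/(margE k (fun S => f S ^+ 2)); ring.
Qed.

Lemma prodE_prod_in (A : {pred I}) (F : I -> T -> R) :
  prodE (fun B => \prod_(k in A) F k (B k)) = \prod_(k in A) margE k (F k).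
Proof.
pose G k := if k \in A then F k else fun=> 1.
have GE B : \prod_(k in A) F k (B k) = \prod_k G k (B k).
  by rewrite big_mkcond; apply: eq_bigr => k _; rewrite /G; case: ifP.
rewrite (eq_prodE GE) prodE_prod [RHS]big_mkcond; apply: eq_bigr => k _.
by rewrite /G; case: ifP; rewrite ?margE_cst.
Qed.

Lemma prodE_coord k f : prodE (fun B => f (B k)) = margE k f.
Proof.
have := prodE_prod_in (pred1 k) (fun=> f).
by rewrite big_pred1_eq; under eq_prodE do rewrite big_pred1_eq.
Qed.

Lemma prodE_coord2 k l f g : k != l ->
  prodE (fun B => f (B k) * g (B l)) = margE k f * margE l g.
Proof.
move=> neq_kl; pose F n := if n == k then f else g.
have prod_pair (h : I -> R) : \prod_(n in pred2 k l) h n = h k * h l.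
  rewrite (bigD1 k) ?inE ?eqxx //= (big_pred1 l) // => n.
  by rewrite !inE; case: eqVneq => [->|_]; rewrite ?eqxx ?(negbTE neq_kl) ?andbT.
have := prodE_prod_in (pred2 k l) F.
rewrite prod_pair /F eqxx eq_sym (negbTE neq_kl) => <-.
by apply: eq_prodE => B; rewrite prod_pair /F eqxx eq_sym (negbTE neq_kl).
Qed.

Lemma prodE_sqr_sum_centered (F : I -> T -> R) :
    (forall k, margE k (F k) = 0) ->
  prodE (fun B => (\sum_k F k (B k)) ^+ 2) = \sum_k margE k (fun S => F k S ^+ 2).
Proof.
move=> centered.
under eq_prodE do rewrite expr2 mulr_suml; rewrite prodE_sum.
apply: eq_bigr => k _; under eq_prodE do rewrite mulr_sumr; rewrite prodE_sum.
rewrite (bigD1 k) //= big1 ?addr0 => [|l neq_lk].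
  by rewrite -(prodE_coord k (fun S => F k S ^+ 2)); apply: eq_prodE => B; rewrite expr2.
by rewrite prodE_coord2 1?eq_sym // centered mul0r.
Qed.

End ProductLaw.

Section UniformLaw.
Variables (R : numFieldType) (T : finType) (A : {set T}).

Definition unif (x : T) : R := if x \in A then #|A|%:R^-1 else 0.

Lemma sum_unifE (f : T -> R) : \sum_x unif x * f x = #|A|%:R^-1 * \sum_(x in A) f x.
Proof.
rewrite [in RHS]big_mkcond mulr_sumr; apply: eq_bigr => x _.
by rewrite /unif; case: ifP; rewrite ?mul0r ?mulr0.
Qed.

Lemma unif_sum1 : (0 < #|A|)%N -> \sum_x unif x = 1.
Proof.
move=> A_gt0; under eq_bigr do rewrite -[unif _]mulr1.
by rewrite sum_unifE sumr_const mulVf // pnatr_eq0 -lt0n.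
Qed.

Lemma sum_unif_mem (P : pred T) :
  \sum_x unif x * (P x)%:R = #|[pred x in A | P x]|%:R / #|A|%:R.
Proof.
rewrite sum_unifE mulrC; congr (_ / _).
rewrite -sumr_const [LHS]big_mkcond [RHS]big_mkcond; apply: eq_bigr => x _.
by rewrite !inE; case: (x \in A); case: (P x).
Qed.

Lemma sum_unif_le (f : T -> R) c : (0 < #|A|)%N ->
  (forall x, x \in A -> f x <= c) -> \sum_x unif x * f x <= c.
Proof.
move=> A_gt0 le_fc; rewrite -[leRHS]mul1r -(unif_sum1 A_gt0) mulr_suml.
apply: ler_sum => x _; rewrite /unif; case: ifP => xA; last by rewrite !mul0r.
by rewrite ler_wpM2l ?invr_ge0 ?ler0n ?le_fc.
Qed.

End UniformLaw.

Lemma card_draws_mem (T : finType) (X : {set T}) (j : T) k : j \in X ->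
  #|[set S : {set T} | [&& S \subset X, #|S| == k.+1 & j \in S]]| = 'C(#|X|.-1, k).
Proof.
move=> jX; rewrite [#|X|](cardsD1 j) jX /= -cards_draws.
rewrite -(@card_in_imset _ _ (fun S => j |: S)); last first.
  move=> S1 S2; rewrite !inE !subsetD1 => /andP[/andP[_ jS1] _] /andP[/andP[_ jS2] _] eqS.
  by rewrite -(setU1K jS1) eqS setU1K.
apply: eq_card => S; rewrite inE; apply/idP/imsetP => [|[S']].
  move=> /and3P[sSX /eqP cS jS]; exists (S :\ j); last by rewrite setD1K.
  rewrite inE subsetD1 setD11 (subset_trans (subD1set S j) sSX) /=.
  by move: cS; rewrite (cardsD1 j) jS add1n => -[->].
rewrite inE subsetD1 => /andP[/andP[sS'X jS'] /eqP cS'] ->.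
by rewrite subUset sub1set jX sS'X cardsU1 jS' cS' setU11 add1n eqxx.
Qed.

Lemma unif_draws_mem (R : numFieldType) (T : finType) (X : {set T}) (j : T) k :
    j \in X -> (0 < k <= #|X|)%N ->
  \sum_S unif R [set S : {set T} | S \subset X & #|S| == k] S * (j \in S)%:R
    = k%:R / #|X|%:R.
Proof.
move=> jX /andP[]; case: k => // k _ le_kX.
rewrite sum_unif_mem cards_draws.
have -> : #|[pred S in [set S : {set T} | S \subset X & #|S| == k.+1] | j \in S]|
    = 'C(#|X|.-1, k).
  by rewrite -(card_draws_mem k jX); apply: eq_card => S; rewrite !inE andbA.
have X_gt0 : (0 < #|X|)%N by apply: leq_trans le_kX.
apply/eqP; rewrite eqr_div ?pnatr_eq0 -?lt0n ?bin_gt0 // -!natrM eqr_nat.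
by rewrite mulnC mul_bin_diag mulnC.
Qed.

Lemma sum_natr_cond (R : pzSemiRingType) (I : finType) (P : pred I) (F : I -> R) :
  \sum_(j | P j) F j = \sum_j (P j)%:R * F j.
Proof.
by rewrite big_mkcond; apply: eq_bigr => j _; case: (P j); rewrite ?mul1r ?mul0r.
Qed.

Section HalfListDensity.
Variables (R : realType) (N : nat) (q : 'I_N -> 'rV[R]_3).
Variables (rc rs dr : R) (p : nat) (rho : R -> R) (nbr : 'I_N -> {set 'I_N}).
Hypothesis p_gt0 : (0 < p)%N.

Local Notation dist := (dist q).
Local Notation Rc := (Rc q rc nbr).
Local Notation Rs := (Rs q rc rs dr nbr).
Local Notation Ns := (Ns q rc rs dr nbr).
Local Notation adm := (adm q rc rs dr p nbr).
Local Notation coef := (coef q rc rs dr p nbr).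
Local Notation batchE := (margE (fun k => unif R (adm k))).

Lemma distC i j : dist i j = dist j i.
Proof.
by rewrite /Defs.dist; congr Num.sqrt; apply: eq_bigr => k _; rewrite -sqrrN opprB.
Qed.

Lemma ExpectE X : Expect q rc rs dr p nbr X = prodE (fun k => unif R (adm k)) X.
Proof. by []. Qed.

Lemma card_adm_gt0 k : (0 < #|adm k|)%N.
Proof. by rewrite cards_draws bin_gt0 geq_minr. Qed.

Lemma adm_sum1 k : \sum_S unif R (adm k) S = 1.
Proof. exact/unif_sum1/card_adm_gt0. Qed.

Lemma coef_ge1 k : 1 <= coef k.
Proof.
rewrite /Defs.coef; case: leqP => // lt_pN.
by rewrite ler_pdivlMr ?ltr0n // mul1r ler_nat ltnW.
Qed.

Lemma coef_minn k : coef k * (minn p (Ns k))%:R = (Ns k)%:R.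
Proof.
rewrite /Defs.coef; case: leqP => _; first by rewrite mul1r.
by rewrite divfK // pnatr_eq0 -lt0n.
Qed.

Lemma coef_sub1_le k : coef k - 1 <= (Ns k)%:R / p%:R.
Proof.
rewrite /Defs.coef; case: leqP => _; first by rewrite subrr divr_ge0 ?ler0n.
by rewrite lerBlDr lerDl.
Qed.

Lemma coef_batch_mem k j : coef k * batchE k (fun S => (j \in S)%:R) = (j \in Rs k)%:R.
Proof.
case: (boolP (j \in Rs k)) => [jR | jNR]; last first.
  rewrite /margE big1 ?mulr0 // => S; rewrite /unif inE.
  case: ifP => [/andP[/subsetP sSR _] | _]; last by rewrite mul0r.
  by rewrite (contraNF (@sSR j) jNR) mulr0.
have Ns_gt0 : (0 < Ns k)%N by apply/card_gt0P; exists j.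
rewrite /margE unif_draws_mem -/(Ns k) ?geq_minr ?leq_min ?p_gt0 ?Ns_gt0 //.
by rewrite mulrA coef_minn divff // pnatr_eq0 -lt0n.
Qed.

Hypothesis rho_ge0 : forall r, 0 <= rho r.
Hypothesis rho_out : forall r, rs < r -> rho r = 0.
Hypothesis dr_ge0 : 0 <= dr.
Hypothesis nbr_irr : forall k, k \notin nbr k.
Hypothesis nbr_half : forall i j, i != j -> dist i j <= rs + dr ->
  (j \in nbr i) != (i \in nbr j).

Lemma notin_Rc k : k \notin Rc k.
Proof. by rewrite inE (negbTE (nbr_irr k)). Qed.

Lemma notin_Rs k : k \notin Rs k.
Proof. by rewrite inE (negbTE (nbr_irr k)). Qed.

Variable i : 'I_N.

Lemma half_list_mem j : i != j -> dist i j <= rs ->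
  ((j \in Rc i) + (i \in Rc j) + (j \in Rs i) + (i \in Rs j) = 1)%N.
Proof.
move=> ij le_d; have le_d' : dist i j <= rs + dr by rewrite (le_trans le_d) ?lerDl.
have := nbr_half ij le_d'; rewrite !inE (distC j i) le_d' !andbT ltNge.
by case: (j \in nbr i); case: (i \in nbr j); case: (dist i j <= rc).
Qed.

Lemma sum_neq_natr (P : pred 'I_N) (F : 'I_N -> R) :
  P i = false -> \sum_(j | P j) F j = \sum_(j | j != i) (P j)%:R * F j.
Proof. by move=> Pi; rewrite (sum_natr_cond P) [LHS](bigD1 i) //= Pi mul0r add0r. Qed.

Definition batch_term m (S : {set 'I_N}) : R :=
  if m == i then coef i * \sum_(j in S) rho (dist j i)
  else coef m * rho (dist m i) * (i \in S)%:R.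

Definition batch_mean m : R :=
  if m == i then \sum_(j in Rs i) rho (dist j i)
  else (i \in Rs m)%:R * rho (dist m i).

Lemma batchE_term m : batchE m (batch_term m) = batch_mean m.
Proof.
rewrite /batch_term /batch_mean; case: eqP => [-> | _]; last first.
  by rewrite margEZ mulrAC coef_batch_mem mulrC.
under eq_margE do rewrite sum_natr_cond.
rewrite margEZ margE_sum mulr_sumr [RHS]sum_natr_cond; apply: eq_bigr => j _.
by under eq_margE do rewrite mulrC; rewrite margEZ mulrCA coef_batch_mem mulrC.
Qed.

Lemma rhotilde_batch_terms B : rhotilde q rc rs dr p rho nbr i B =
    \sum_(j in Rc i) rho (dist i j)
  + \sum_(j' < N | (j' != i) && (i \in Rc j')) rho (dist j' i)
  + \sum_m batch_term m (B m).
Proof.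
rewrite /rhotilde [X in _ = _ + X](bigD1 i) //= /batch_term eqxx -!addrA.
congr (_ + (_ + (_ + _))); rewrite big_mkcondr /=; apply: eq_bigr => m /negbTE ->.
by case: (i \in B m); rewrite ?mulr1 ?mulr0.
Qed.

Lemma rhobar_batch_means :
    \sum_(j in Rc i) rho (dist i j)
  + \sum_(j' < N | (j' != i) && (i \in Rc j')) rho (dist j' i)
  + \sum_m batch_mean m = rhobar q rs rho i.
Proof.
rewrite [X in _ + X = _](bigD1 i) //= {1}/batch_mean eqxx /rhobar.
rewrite (sum_neq_natr (P := fun j => j \in Rc i)) ?(negbTE (notin_Rc i)) //.
rewrite (sum_neq_natr (P := fun j => (j != i) && (i \in Rc j))) ?eqxx //.
rewrite (sum_neq_natr (P := fun j => j \in Rs i)) ?(negbTE (notin_Rs i)) //.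
rewrite (sum_neq_natr (P := fun j => (j != i) && (dist i j <= rs))) ?eqxx //.
rewrite -!big_split; apply: eq_bigr => j ji /=.
rewrite /batch_mean (negbTE ji) (distC j i) /= addrA -!mulrDl -!natrD.
case: (boolP (dist i j <= rs)) => [le_d | /negbTE gt_d].
  by rewrite half_list_mem // eq_sym.
by rewrite rho_out ?mulr0 // ltNge gt_d.
Qed.

Definition batch_dev m (S : {set 'I_N}) : R := batch_term m S - batch_mean m.

Lemma Qi_batch_devs B : Qi q rc rs dr p rho nbr i B = \sum_m batch_dev m (B m).
Proof. by rewrite /Qi rhotilde_batch_terms -rhobar_batch_means /batch_dev sumrB; ring. Qed.

Lemma batchE_dev m : batchE m (batch_dev m) = 0.
Proof. by rewrite /batch_dev -batchE_term margE_centered //; exact: adm_sum1. Qed.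

Lemma Expect_Qi : Expect q rc rs dr p nbr (Qi q rc rs dr p rho nbr i) = 0.
Proof.
rewrite ExpectE (eq_prodE _ Qi_batch_devs) prodE_sum big1 // => m _.
by rewrite (prodE_coord adm_sum1) batchE_dev.
Qed.

Lemma Variance_Qi : Variance q rc rs dr p nbr (Qi q rc rs dr p rho nbr i) =
  \sum_m batchE m (fun S => batch_dev m S ^+ 2).
Proof.
rewrite /Variance Expect_Qi ExpectE; under eq_prodE do rewrite subr0 Qi_batch_devs.
exact: (prodE_sqr_sum_centered adm_sum1 batchE_dev).
Qed.

Local Notation M := (rhomax q rho i).

Lemma rho_le_rhomax j : j != i -> rho (dist j i) <= M.
Proof. by move=> ji; rewrite distC; apply: le_bigmax_cond. Qed.

Lemma sum_batch_le (S : {set 'I_N}) :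
  S \subset Rs i -> \sum_(j in S) rho (dist j i) <= M * #|S|%:R.
Proof.
move=> sSR; rewrite mulr_natr -sumr_const; apply: ler_sum => j jS.
by apply: rho_le_rhomax; apply: contraTneq (subsetP sSR j jS) => ->; apply: notin_Rs.
Qed.

Lemma own_batch_var_le : batchE i (fun S => batch_dev i S ^+ 2) <= (M * (Ns i)%:R) ^+ 2.
Proof.
have mean_bd : 0 <= batch_mean i <= M * (Ns i)%:R.
  by rewrite /batch_mean eqxx sumr_ge0 ?sum_batch_le.
apply: sum_unif_le (card_adm_gt0 i) _ => S; rewrite inE => /andP[sSR /eqP card_S].
have coef_ge0 : 0 <= coef i := le_trans ler01 (coef_ge1 i).
have term_bd : 0 <= batch_term i S <= M * (Ns i)%:R.
  rewrite /batch_term eqxx mulr_ge0 ?sumr_ge0 //=.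
  by rewrite -coef_minn -card_S mulrCA ler_wpM2l ?sum_batch_le.
move: mean_bd term_bd; rewrite /batch_dev => /andP[? ?] /andP[? ?]; nra.
Qed.

Lemma other_batch_var m : m != i -> batchE m (fun S => batch_dev m S ^+ 2)
  = (i \in Rs m)%:R * (coef m - 1) * rho (dist m i) ^+ 2.
Proof.
move=> mi; rewrite /batch_dev -batchE_term (margE_sqr_centered adm_sum1).
have term_sqr S : batch_term m S ^+ 2
    = coef m * rho (dist m i) ^+ 2 * (coef m * (i \in S)%:R).
  by rewrite /batch_term (negbTE mi); case: (i \in S) => /=; ring.
under eq_margE do rewrite term_sqr.
rewrite 2!margEZ coef_batch_mem batchE_term /batch_mean (negbTE mi).
by case: (i \in Rs m) => /=; ring.
Qed.

Lemma other_batch_var_le m : m != i -> batchE m (fun S => batch_dev m S ^+ 2)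
  <= M ^+ 2 * ((i \in Rs m)%:R * ((Ns m)%:R / p%:R)).
Proof.
move=> mi; rewrite other_batch_var //; case: (i \in Rs m); rewrite ?mul0r ?mulr0 //.
rewrite !mul1r mulrC !expr2; have rho_le := rho_le_rhomax mi.
by rewrite ler_pM ?mulr_ge0 ?subr_ge0 ?coef_ge1 ?coef_sub1_le ?ler_pM.
Qed.

Lemma Variance_Qi_le : Variance q rc rs dr p nbr (Qi q rc rs dr p rho nbr i) <=
  M ^+ 2 * ((Ns i)%:R ^+ 2 + \sum_(j' < N | i \in Rs j') (Ns j')%:R / p%:R).
Proof.
rewrite Variance_Qi (bigD1 i) //= mulrDr -exprMn lerD ?own_batch_var_le //.
rewrite (sum_neq_natr (P := fun j => i \in Rs j)) ?(negbTE (notin_Rs i)) // mulr_sumr.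
by apply: ler_sum => m; apply: other_batch_var_le.
Qed.

End HalfListDensity.

Theorem theorem3 (R : realType) (N : nat) (q : 'I_N -> 'rV[R]_3)
  (rc rs dr : R) (p : nat) (rho : R -> R) (nbr : 'I_N -> {set 'I_N}) :
  0 < rc -> rc < rs -> 0 <= dr -> (0 < p)%N ->
  (forall r, 0 <= rho r) ->
  (forall r, rs < r -> rho r = 0) ->
  (forall k : 'I_N, k \notin nbr k) ->
  (forall i j : 'I_N, i != j -> dist q i j <= rs + dr ->
     (j \in nbr i) != (i \in nbr j)) ->
  forall i : 'I_N,
    Expect q rc rs dr p nbr (Qi q rc rs dr p rho nbr i) = 0 /\
    Variance q rc rs dr p nbr (Qi q rc rs dr p rho nbr i) <=
      rhomax q rho i ^+ 2 *
        ((Ns q rc rs dr nbr i)%:R ^+ 2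
         + \sum_(j' < N | i \in Rs q rc rs dr nbr j')
             (Ns q rc rs dr nbr j')%:R / p%:R).
Proof.
move=> _ _ dr_ge0 p_gt0 rho_ge0 rho_out nbr_irr nbr_half i.
by split; [apply: Expect_Qi | apply: Variance_Qi_le].
Qed.
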